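(* Let $R$ be an arithmetic ring of Krull dimension $0$. Then $\lambda\text{-}\dim(R)\le 2$.
   Context: All rings are commutative with identity. $R$ is arithmetic if $R_M$ is a valuation ring (ideals totally ordered by inclusion) for every maximal ideal $M$. For an $R$-module $E$, $\lambda_R(E)$ is the supremum of the $n$ for which there is an exact sequence $F_n\to\cdots\to F_0\to E\to0$ with $F_i$ free of finite rank ($-1$ if $E$ is not finitely generated); $\lambda\text{-}\dim(R)$ is the least $n$ (or $\infty$) such that $\lambda_R(E)\ge n$ implies $\lambda_R(E)=\infty$ for all $R$-modules $E$. *)

From HB Require Import structures.
From mathcomp Require Import all_boot all_order all_algebra.
Set Implicit Arguments. Unset Strict Implicit. Unset Printing Implicit Defensive.
Import GRing.Theory.
Local Open Scope ring_scope.

Section Ideals.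
Variable R : comNzRingType.

Definition is_ideal (I : R -> Prop) : Prop :=
  [/\ I 0, (forall x y, I x -> I y -> I (x + y)) & (forall a x, I x -> I (a * x))].

Definition prime_ideal (P : R -> Prop) : Prop :=
  [/\ is_ideal P, ~ P 1 & (forall a b, P (a * b) -> P a \/ P b)].

Definition maximal_ideal (M : R -> Prop) : Prop :=
  [/\ is_ideal M, ~ M 1 &
     (forall J : R -> Prop, is_ideal J -> ~ J 1 -> (forall x, M x -> J x) ->
        forall x, J x -> M x)].

Definition prime_chain (P : nat -> R -> Prop) (n : nat) : Prop :=
  (forall i, (i <= n)%N -> prime_ideal (P i)) /\
  (forall i, (i < n)%N ->
     (forall x, P i x -> P i.+1 x) /\ exists x, P i.+1 x /\ ~ P i x).

Definition krull_dim_eq (d : nat) : Prop :=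
  (exists P, prime_chain P d) /\ ~ (exists P, prime_chain P d.+1).

(* The localization R_M, presented as fractions (a, s) with s outside M,
   modulo (a,s) ~ (b,t) iff u (a t - b s) = 0 for some u outside M. *)
Definition in_loc (M : R -> Prop) (x : R * R) : Prop := ~ M x.2.

Definition frac_equiv (M : R -> Prop) (x y : R * R) : Prop :=
  exists u, ~ M u /\ u * (x.1 * y.2 - y.1 * x.2) = 0.

Definition loc_ideal (M : R -> Prop) (I : R * R -> Prop) : Prop :=
  [/\ (forall x, I x -> in_loc M x),
      (forall x y, in_loc M x -> in_loc M y -> frac_equiv M x y -> I x -> I y),
      I (0, 1),
      (forall x y, I x -> I y -> I (x.1 * y.2 + y.1 * x.2, x.2 * y.2)) &
      (forall c x, in_loc M c -> I x -> I (c.1 * x.1, c.2 * x.2))].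

Definition localization_is_valuation (M : R -> Prop) : Prop :=
  forall I J, loc_ideal M I -> loc_ideal M J ->
    (forall x, I x -> J x) \/ (forall x, J x -> I x).

Definition arithmetic : Prop :=
  forall M, maximal_ideal M -> localization_is_valuation M.

(* There is an exact sequence F_n -> ... -> F_0 -> E -> 0 with F_i = R^(k i)
   free of finite rank; the map F_(i+1) -> F_i is u |-> u *m A i. *)
Definition has_free_pres (E : lmodType R) (n : nat) : Prop :=
  exists (k : nat -> nat) (A : forall i, 'M[R]_(k i.+1, k i))
         (f : {linear 'rV[R]_(k 0) -> E}),
    [/\ (forall e : E, exists u, f u = e),
        ((0 < n)%N -> forall u, f u = 0 <-> exists v, u = v *m A 0) &
        (forall i, (i.+1 < n)%N -> forall u : 'rV[R]_(k i.+1),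
             u *m A i = 0 <-> exists v, u = v *m A i.+1)].

Definition lambda_ge (E : lmodType R) (n : nat) : Prop := has_free_pres E n.

Definition lambda_infinite (E : lmodType R) : Prop := forall n, has_free_pres E n.

Definition lambda_dim_le (d : nat) : Prop :=
  exists n, (n <= d)%N /\
    forall E : lmodType R, lambda_ge E n -> lambda_infinite E.

End Ideals.

From mathcomp Require Import all_boot all_order all_algebra perm ring.
From mathcomp Require classical_sets boolp.
From Stdlib Require Import Classical.
Set Implicit Arguments. Unset Strict Implicit. Unset Printing Implicit Defensive.
Import GRing.Theory.
Local Open Scope ring_scope.

(* Fix a maximal ideal M. As R has Krull dimension 0, the elements of M are
   nilpotent in R_M and the others are units there; as R is arithmetic,
   divisibility in R_M is total. Hence, up to elements outside M, every matrix
   over R is equivalent to a diagonal one (a Smith normal form over R_M).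
   Given an exact sequence R^k2 -A1-> R^k1 -A0-> R^k0, this produces at M an
   explicit finite matrix whose rows lie in ker A1 and span it near M; the key
   point is that in the zero-dimensional valuation ring R_M, Ann(d) <= (h)
   implies Ann(h) <= (d). The elements r for which some finite matrix spans
   ker A1 up to powers of r form an ideal that meets the complement of every
   maximal ideal, hence contains 1, so ker A1 is finitely generated. Iterating
   this along F2 -> F1 -> F0 -> E -> 0 yields free resolutions of any length. *)

Section Ideals.
Variable R : comNzRingType.
Implicit Types (I A M P : R -> Prop) (a b r u x y : R).

Lemma is_ideal0 I : is_ideal I -> I 0.
Proof. by case. Qed.

Lemma is_idealD I x y : is_ideal I -> I x -> I y -> I (x + y).
Proof. by case=> _ + _; apply. Qed.

Lemma is_idealMl I a x : is_ideal I -> I x -> I (a * x).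
Proof. by case=> _ _; apply. Qed.

Lemma is_idealMr I a x : is_ideal I -> I x -> I (x * a).
Proof. by rewrite mulrC; apply: is_idealMl. Qed.

Definition ideal_adjoin I x : R -> Prop := fun z => exists p r, I p /\ z = p + r * x.

Lemma ideal_adjoin_ideal I x : is_ideal I -> is_ideal (ideal_adjoin I x).
Proof.
move=> hI; split.
- by exists 0, 0; rewrite mul0r addr0; split => //; apply: is_ideal0.
- move=> y z [p [r [Ip ->]]] [p' [r' [Ip' ->]]].
  exists (p + p'), (r + r'); split; first exact: is_idealD.
  by rewrite mulrDl addrACA.
- move=> c y [p [r [Ip ->]]]; exists (c * p), (c * r); split; first exact: is_idealMl.
  by rewrite mulrDr mulrA.
Qed.

Lemma ideal_adjoin_sub I x y : I y -> ideal_adjoin I x y.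
Proof. by move=> Iy; exists y, 0; rewrite mul0r addr0. Qed.

Lemma ideal_adjoin_gen I x : is_ideal I -> ideal_adjoin I x x.
Proof. by exists 0, 1; rewrite mul1r add0r; split => //; apply: is_ideal0. Qed.

Lemma ideal_bigcup (F : (R -> Prop) -> Prop) :
  (exists X, F X) -> (forall X, F X -> is_ideal X) ->
  classical_sets.total_on F classical_sets.subset ->
  is_ideal (classical_sets.bigcup F id).
Proof.
move=> [X0 FX0] Fid Ftot; split.
- by exists X0 => //; exact: is_ideal0 (Fid _ FX0).
- move=> x y [X FX Xx] [Y FY Yy].
  case: (Ftot _ _ FX FY) => [XY|YX].
  + by exists Y => //; apply: is_idealD (Fid _ FY) (XY _ Xx) Yy.
  + by exists X => //; apply: is_idealD (Fid _ FX) Xx (YX _ Yy).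
- by move=> a x [X FX Xx]; exists X => //; apply: is_idealMl (Fid _ FX) Xx.
Qed.

Lemma ideal_maximal_avoiding I (S : R -> Prop) :
  is_ideal I -> (forall x, I x -> ~ S x) ->
  exists A, [/\ is_ideal A, (forall x, I x -> A x), (forall x, A x -> ~ S x) &
    (forall B, is_ideal B -> (forall x, A x -> B x) -> (forall x, B x -> ~ S x) ->
       forall x, B x -> A x)].
Proof.
move=> hI hIS.
pose good X := [/\ is_ideal X, (forall x, I x -> X x) & (forall x, X x -> ~ S x)].
pose none : R -> Prop := fun _ => False.
(* [none] is admitted so that the union of the empty chain is also admissible *)
have [F Fgood Ftot|A [[A0|[hA IA AS]] Amax]] :=
  @classical_sets.Zorn_bigcup R (fun X => X = none \/ good X).
- have [[X0 FX0 X0n]|Fnone] := classic (exists2 X, F X & X <> none); last first.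
    left; apply: boolp.funext => x; apply: boolp.propext; split => // -[X FX Xx].
    by apply: Fnone; exists X => // eX; rewrite eX in Xx.
  have goodX0 : good X0 by case: (Fgood _ FX0).
  have eU : classical_sets.bigcup F id =
            classical_sets.bigcup (fun X => F X /\ good X) id.
    apply: boolp.funext => x; apply: boolp.propext.
    split=> -[X FX Xx]; exists X => //; last by case: FX.
    by case: (Fgood _ FX) => [eX|]; [rewrite eX in Xx|].
  right; split.
  + rewrite eU; apply: ideal_bigcup; first by exists X0.
      by move=> X [_ []].
    by move=> X Y [FX _] [FY _]; apply: Ftot.
  + by move=> x Ix; exists X0 => //; case: goodX0 => _ + _; apply.
  + move=> x [X FX Xx]; case: (Fgood _ FX) => [eX|[_ _]]; last exact.
    by rewrite eX in Xx.
- exfalso; apply: (Amax I); last by right.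
  rewrite A0; split=> [x []|IA]; exact: IA 0 (is_ideal0 hI).
- exists A; split => // B hB AB BS x Bx; apply: NNPP => nAx.
  apply: (Amax B); last by right; split => // y Iy; apply/AB/IA.
  by split => // BA; exact: nAx (BA x Bx).
Qed.

Lemma maximal_ideal_ideal M : maximal_ideal M -> is_ideal M.
Proof. by case. Qed.

Lemma maximal_ideal_neq1 M : maximal_ideal M -> ~ M 1.
Proof. by case. Qed.

Lemma maximal_ideal_inv M u : maximal_ideal M -> ~ M u ->
  exists m b, M m /\ 1 = m + b * u.
Proof.
case=> hM _ Mmax nMu; apply: NNPP => no1.
apply: nMu; apply: (Mmax (ideal_adjoin M u) _ _ _ u).
- exact: ideal_adjoin_ideal.
- by move=> [m [b [Mm e]]]; apply: no1; exists m, b.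
- by move=> x; apply: ideal_adjoin_sub.
- exact: ideal_adjoin_gen.
Qed.

Lemma maximal_ideal_prime M : maximal_ideal M -> prime_ideal M.
Proof.
move=> hM; have hMi := maximal_ideal_ideal hM.
split=> //; first exact: maximal_ideal_neq1.
move=> a b Mab; case: (classic (M a)) => [|nMa]; [by left | right].
have [m [r [Mm e]]] := maximal_ideal_inv hM nMa.
have -> : b = m * b + r * (a * b) by rewrite mulrA -mulrDl -e mul1r.
by apply: (is_idealD hMi); [apply: is_idealMr | apply: is_idealMl].
Qed.

Lemma maximal_ideal_exists I : is_ideal I -> ~ I 1 ->
  exists M, maximal_ideal M /\ forall x, I x -> M x.
Proof.
move=> hI nI1.
have [A [hA IA AS Amax]] := @ideal_maximal_avoiding I (eq^~ 1) hI
  (fun x Ix e => nI1 (eq_ind x I Ix 1 e)).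
exists A; split => //; split => [//||J hJ nJ1 AJ].
  by move=> A1; exact: AS 1 A1 erefl.
by apply: Amax => // x Jx ex; apply: nJ1; rewrite -ex.
Qed.

Lemma local_global_ideal1 I : is_ideal I ->
  (forall M, maximal_ideal M -> exists r, I r /\ ~ M r) -> I 1.
Proof.
move=> hI Iloc; apply: NNPP => nI1.
have [M [hM IM]] := maximal_ideal_exists hI nI1.
by have [r [Ir nMr]] := Iloc M hM; apply/nMr/IM.
Qed.

Lemma maximal_avoiding_prime (S : R -> Prop) A :
  S 1 -> (forall x y, S x -> S y -> S (x * y)) ->
  is_ideal A -> (forall x, A x -> ~ S x) ->
  (forall B, is_ideal B -> (forall x, A x -> B x) -> (forall x, B x -> ~ S x) ->
     forall x, B x -> A x) ->
  prime_ideal A.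
Proof.
move=> S1 SM hA AS Amax; split=> //; first by move=> A1; apply: AS A1 S1.
move=> x y Axy; apply: NNPP => /not_or_and[nAx nAy].
have meetS z : ~ A z -> exists p r s, [/\ A p, S s & s = p + r * z].
  move=> nAz; apply: NNPP => noS; apply: nAz; apply: (Amax (ideal_adjoin A z) _ _ _ z).
  - exact: ideal_adjoin_ideal.
  - by move=> w; apply: ideal_adjoin_sub.
  - by move=> w [p [r [Ap ->]]] Sw; apply: noS; exists p, r, (p + r * z).
  - exact: ideal_adjoin_gen.
have [p [r [s [Ap Ss es]]]] := meetS x nAx.
have [p' [r' [s' [Ap' Ss' es']]]] := meetS y nAy.
apply: (AS (s * s')); last exact: SM.
have -> : s * s' = p * s' + (r * x * p' + r * r' * (x * y)) by rewrite es es'; ring.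
by apply: (is_idealD hA); [apply: is_idealMr | apply: (is_idealD hA); apply: is_idealMl].
Qed.

Lemma dim0_prime_maximal P M : krull_dim_eq R 0 -> prime_ideal P ->
  maximal_ideal M -> (forall x, P x -> M x) -> forall x, M x -> P x.
Proof.
move=> [_ nochain] hP hM PM x Mx; apply: NNPP => nPx; apply: nochain.
exists (fun i => if i == 0%N then P else M); split.
  by case=> [|[|i]] // _; apply: maximal_ideal_prime.
by case=> [|i] // _; split => //; exists x.
Qed.

End Ideals.

Section CongruenceModIdeal.
Variable R : comNzRingType.
Variable E : R -> Prop.
Hypothesis hE : is_ideal E.

Definition mxin m n (X : 'M[R]_(m, n)) := forall i j, E (X i j).
Definition mxcong m n (X Y : 'M[R]_(m, n)) := mxin (X - Y).

Lemma mxin0 m n : mxin (0 : 'M_(m, n)).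
Proof. by move=> i j; rewrite mxE; apply: is_ideal0. Qed.

Lemma mxinD m n (X Y : 'M_(m, n)) : mxin X -> mxin Y -> mxin (X + Y).
Proof. by move=> hX hY i j; rewrite mxE; apply: is_idealD. Qed.

Lemma mxinMl m n p (X : 'M_(m, n)) (Y : 'M_(n, p)) : mxin Y -> mxin (X *m Y).
Proof.
move=> hY i j; rewrite mxE; apply: (big_ind E); first exact: is_ideal0.
  by move=> x y; apply: is_idealD.
by move=> k _; apply: is_idealMl.
Qed.

Lemma mxinMr m n p (X : 'M_(m, n)) (Y : 'M_(n, p)) : mxin X -> mxin (X *m Y).
Proof.
move=> hX i j; rewrite mxE; apply: (big_ind E); first exact: is_ideal0.
  by move=> x y; apply: is_idealD.
by move=> k _; apply: is_idealMr.
Qed.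

Lemma mxin_block m1 m2 n1 n2 (A : 'M_(m1, n1)) (B : 'M_(m1, n2))
    (C : 'M_(m2, n1)) (D : 'M_(m2, n2)) :
  mxin A -> mxin B -> mxin C -> mxin D -> mxin (block_mx A B C D).
Proof.
move=> hA hB hC hD i j; rewrite -[i]splitK -[j]splitK.
case: (split i) => i'; case: (split j) => j' /=.
- by rewrite block_mxEul.
- by rewrite block_mxEur.
- by rewrite block_mxEdl.
- by rewrite block_mxEdr.
Qed.

Lemma mxcong_eq m n (X Y : 'M_(m, n)) : X = Y -> mxcong X Y.
Proof. by move=> ->; rewrite /mxcong subrr; apply: mxin0. Qed.

Lemma mxcong_refl m n (X : 'M_(m, n)) : mxcong X X.
Proof. exact: mxcong_eq. Qed.

Lemma mxcong_trans m n (Y X Z : 'M_(m, n)) : mxcong X Y -> mxcong Y Z -> mxcong X Z.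
Proof. by move=> hXY hYZ; have := mxinD hXY hYZ; rewrite addrA subrK. Qed.

Lemma mxcong_mul m n p (X X' : 'M_(m, n)) (Y Y' : 'M_(n, p)) :
  mxcong X X' -> mxcong Y Y' -> mxcong (X *m Y) (X' *m Y').
Proof.
move=> hX hY; rewrite /mxcong.
have -> : X *m Y - X' *m Y' = (X - X') *m Y + X' *m (Y - Y').
  by rewrite mulmxBl mulmxBr addrA subrK.
by apply: mxinD; [apply: mxinMr | apply: mxinMl].
Qed.

Lemma mxcong_block m1 m2 n1 n2 (A A' : 'M_(m1, n1)) (B B' : 'M_(m1, n2))
    (C C' : 'M_(m2, n1)) (D D' : 'M_(m2, n2)) :
  mxcong A A' -> mxcong B B' -> mxcong C C' -> mxcong D D' ->
  mxcong (block_mx A B C D) (block_mx A' B' C' D').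
Proof.
by move=> hA hB hC hD; rewrite /mxcong opp_block_mx add_block_mx; apply: mxin_block.
Qed.

Definition mxcong_inv n (P P' : 'M[R]_n) :=
  mxcong (P *m P') 1%:M /\ mxcong (P' *m P) 1%:M.

Lemma mxcong_inv_exact n (P P' : 'M[R]_n) :
  P *m P' = 1%:M -> P' *m P = 1%:M -> mxcong_inv P P'.
Proof. by move=> e1 e2; split; apply: mxcong_eq. Qed.

Lemma mxcong_invM n (P P' Q Q' : 'M[R]_n) :
  mxcong_inv P P' -> mxcong_inv Q Q' -> mxcong_inv (P *m Q) (Q' *m P').
Proof.
have cancel4 (A A' B B' : 'M[R]_n) : mxcong (A *m A') 1%:M ->
    mxcong (B *m B') 1%:M -> mxcong (A *m B *m (B' *m A')) 1%:M.
  move=> hA hB; apply: (@mxcong_trans _ _ (A *m 1%:M *m A')); last by rewrite mulmx1.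
  rewrite mulmxA -(mulmxA A).
  by apply: mxcong_mul (mxcong_mul (mxcong_refl _) hB) (mxcong_refl _).
by move=> [hP hP'] [hQ hQ']; split; apply: cancel4.
Qed.

Lemma lift0_mxM n (X Y : 'M[R]_n) : lift0_mx X *m lift0_mx Y = lift0_mx (X *m Y).
Proof. by rewrite /lift0_mx mulmx_block !mulmx0 !mul0mx !addr0 !add0r mulmx1. Qed.

Lemma mxcong_inv_lift0 n (P P' : 'M[R]_n) :
  mxcong_inv P P' -> mxcong_inv (lift0_mx P) (lift0_mx P').
Proof.
move=> [hP hP']; rewrite /mxcong_inv !lift0_mxM (scalar_mx_block 1 n).
by split; apply: mxcong_block => //; apply: mxcong_refl.
Qed.

Definition diag_rect (d : nat -> R) m n : 'M[R]_(m, n) :=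
  \matrix_(i, j) if (i : nat) == j then d i else 0.

Definition mx_diagonalizable_mod m n (A : 'M[R]_(m, n)) :=
  exists (P P' : 'M_m) (Q Q' : 'M_n) (d : nat -> R),
    [/\ mxcong_inv P P', mxcong_inv Q Q' & mxcong (P *m A *m Q) (diag_rect d m n)].

Lemma mxin_diagonalizable m n (A : 'M[R]_(m, n)) : mxin A -> mx_diagonalizable_mod A.
Proof.
move=> hA; exists 1%:M, 1%:M, 1%:M, 1%:M, (fun _ => 0).
split; try by apply: mxcong_inv_exact; rewrite mulmx1.
by rewrite mul1mx mulmx1 => i j; rewrite !mxE if_same subr0.
Qed.

Lemma diagonalizable_transform m n (A : 'M[R]_(m, n)) P P' Q Q' :
  mxcong_inv P P' -> mxcong_inv Q Q' ->
  mx_diagonalizable_mod (P *m A *m Q) -> mx_diagonalizable_mod A.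
Proof.
move=> hP hQ [P2 [P2' [Q2 [Q2' [d [hP2 hQ2 hD]]]]]].
exists (P2 *m P), (P' *m P2'), (Q *m Q2), (Q2' *m Q'), d.
by split; [exact: mxcong_invM | exact: mxcong_invM | rewrite !mulmxA in hD *].
Qed.

Lemma diagonalizable_cong m n (A B : 'M[R]_(m, n)) :
  mxcong A B -> mx_diagonalizable_mod B -> mx_diagonalizable_mod A.
Proof.
move=> hAB [P [P' [Q [Q' [d [hP hQ hD]]]]]]; exists P, P', Q, Q', d; split => //.
apply: mxcong_trans hD; apply: mxcong_mul (mxcong_refl _).
exact: mxcong_mul (mxcong_refl _) hAB.
Qed.

Lemma diagonalizable_block m n h (A : 'M[R]_(m, n)) :
  mx_diagonalizable_mod A -> mx_diagonalizable_mod (block_mx (h%:M : 'M_1) 0 0 A).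
Proof.
move=> [P [P' [Q [Q' [d [hP hQ hD]]]]]].
exists (lift0_mx P), (lift0_mx P'), (lift0_mx Q), (lift0_mx Q').
exists (fun k => if k is k'.+1 then d k' else h).
split; try exact: mxcong_inv_lift0.
rewrite /lift0_mx !mulmx_block !mul1mx !mulmx1 !mul0mx !mulmx0 !addr0 !add0r mul0mx.
have -> : diag_rect (fun k => if k is k'.+1 then d k' else h) (1 + m) (1 + n) =
          block_mx h%:M 0 0 (diag_rect d m n).
  apply/matrixP => i j; rewrite -[i]splitK -[j]splitK.
  case: (split i) => i'; case: (split j) => j' /=.
  - by rewrite block_mxEul !mxE /= !ord1.
  - by rewrite block_mxEur !mxE /= ord1.
  - by rewrite block_mxEdl !mxE /= ord1.
  - by rewrite block_mxEdr !mxE /= eqSS.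
by apply: mxcong_block => //; apply: mxcong_refl.
Qed.

Lemma lower_unitri_mul m n (Y Z : 'M[R]_(n, m)) :
  block_mx 1%:M 0 Y 1%:M *m block_mx 1%:M 0 Z 1%:M =
  block_mx 1%:M 0 (Y + Z) 1%:M :> 'M_(m + n).
Proof. by rewrite mulmx_block !mul1mx !mulmx1 !mul0mx !mulmx0 !addr0 !add0r. Qed.

Lemma upper_unitri_mul m n (X Z : 'M[R]_(m, n)) :
  block_mx 1%:M X 0 1%:M *m block_mx 1%:M Z 0 1%:M =
  block_mx 1%:M (X + Z) 0 1%:M :> 'M_(m + n).
Proof. by rewrite mulmx_block !mul1mx !mulmx1 !mul0mx !mulmx0 !addr0 !add0r addrC. Qed.

Lemma pivot_reduce m n (A : 'M[R]_(1 + m, 1 + n)) h : ulsubmx A = h%:M ->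
  (forall i j, exists c, E (A i j - c * h)) ->
  exists (L L' : 'M_(1 + m)) (U U' : 'M_(1 + n)) (A' : 'M_(m, n)),
    [/\ mxcong_inv L L', mxcong_inv U U' &
        mxcong (L *m A *m U) (block_mx h%:M 0 0 A')].
Proof.
move=> hA hdiv.
have [fr hfr] : {fr : 'I_n -> R & forall j, E (ursubmx A 0 j - fr j * h)}.
  apply: (@boolp.choice _ _ (fun j c => E (ursubmx A 0 j - c * h))) => j.
  by rewrite !mxE; apply: hdiv.
have [fc hfc] : {fc : 'I_m -> R & forall i, E (dlsubmx A i 0 - fc i * h)}.
  apply: (@boolp.choice _ _ (fun i c => E (dlsubmx A i 0 - c * h))) => i.
  by rewrite !mxE; apply: hdiv.
pose xr := \row_j fr j; pose yc := \col_i fc i.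
exists (block_mx 1%:M 0 (- yc) 1%:M), (block_mx 1%:M 0 yc 1%:M).
exists (block_mx 1%:M (- xr) 0 1%:M), (block_mx 1%:M xr 0 1%:M).
exists (drsubmx A - yc *m ursubmx A - (dlsubmx A - yc *m h%:M) *m xr).
split.
- by apply: mxcong_inv_exact; rewrite lower_unitri_mul ?addNr ?subrr -scalar_mx_block.
- by apply: mxcong_inv_exact; rewrite upper_unitri_mul ?addNr ?subrr -scalar_mx_block.
rewrite -{1}[A]submxK hA !mulmx_block !mul1mx !mul0mx !mulmx0 !mulmx1.
rewrite !addr0 ?add0r !mulNmx mul_scalar_mx mul_mx_scalar.
apply: mxcong_block; rewrite /mxcong ?subr0.
- exact: mxcong_refl.
- move=> i j; rewrite (ord1 i) !mxE; have := hfr j; rewrite !mxE.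
  by rewrite ?mulrN addrC [h * _]mulrC.
- move=> i j; rewrite (ord1 j) !mxE; have := hfc i; rewrite !mxE.
  by rewrite ?mulrN addrC [h * _]mulrC.
- apply: mxcong_eq.
  by rewrite mulmxN addrC (addrC (- _) (drsubmx A)) (addrC (- (h *: yc))).
Qed.

Hypothesis dvd_total : forall a b : R, exists c, E (a - c * b) \/ E (b - c * a).

Lemma seq_divisor_mod (s : seq R) : exists2 h, h = 0 \/ h \in s &
  forall g, g \in s -> exists c, E (g - c * h).
Proof.
elim: s => [|x s [h hs hdiv]]; first by exists 0; [left|].
have [c [hc|hc]] := dvd_total x h.
  exists h; first by case: hs => [->|hs]; [left | right; rewrite inE hs orbT].
  by move=> g; rewrite inE => /orP[/eqP ->|]; [exists c | exact: hdiv].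
exists x; first by right; rewrite inE eqxx.
move=> g; rewrite inE => /orP[/eqP ->|gs].
  by exists 1; rewrite mul1r subrr; apply: is_ideal0.
have [c' hc'] := hdiv g gs; exists (c' * c).
have -> : g - c' * c * x = (g - c' * h) + c' * (h - c * x) by ring.
by apply: is_idealD => //; apply: is_idealMl.
Qed.

Theorem mx_diagonalizable_modP m n (A : 'M[R]_(m, n)) : mx_diagonalizable_mod A.
Proof.
elim: m n A => [|m IH] n A; first by apply: mxin_diagonalizable => -[].
case: n A => [|n] A; first by apply: mxin_diagonalizable => ? [].
have [h hs hdiv] := seq_divisor_mod [seq A p.1 p.2 | p <- enum {: 'I_m.+1 * 'I_n.+1}].
have {}hdiv i j : exists c, E (A i j - c * h).
  by apply: hdiv; apply/mapP; exists (i, j); rewrite ?mem_enum.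
case: hs => [h0|/mapP[[i0 j0] _ /= eh]].
  by apply: mxin_diagonalizable => i j; have [c] := hdiv i j; rewrite h0 mulr0 subr0.
pose swap k (k0 : 'I_k.+1) := tperm_mx k0 0 : 'M[R]_k.+1.
have swap_inv k k0 : mxcong_inv (swap k k0) (swap k k0).
  by apply: mxcong_inv_exact; rewrite /swap /tperm_mx -perm_mxM tperm2 perm_mx1.
apply: (diagonalizable_transform (swap_inv _ i0) (swap_inv _ j0)).
have [T defT] : {T : 'M_(1 + m, 1 + n) | T = swap _ i0 *m A *m swap _ j0}.
  by exists (swap _ i0 *m A *m swap _ j0).
rewrite -defT.
have eT i j : T i j = A (tperm i0 0 i) (tperm j0 0 j).
  by rewrite defT /swap -xrowE -xcolE !mxE.
have hT : ulsubmx T = h%:M.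
  apply/matrixP => i j; rewrite !ord1 !mxE eT /=.
  have zero k : lshift k (0 : 'I_1) = 0 :> 'I_k.+1 by apply: val_inj.
  by rewrite !zero !tpermR eh.
have hTdiv i j : exists c, E (T i j - c * h) by rewrite eT; apply: hdiv.
have [L [L' [U [U' [A' [hL hU hLTU]]]]]] := pivot_reduce hT hTdiv.
apply: (diagonalizable_transform hL hU); apply: (diagonalizable_cong hLTU).
exact/diagonalizable_block/IH.
Qed.

End CongruenceModIdeal.

Section Localization.
Variable R : comNzRingType.
Variable M : R -> Prop.
Hypothesis hM : maximal_ideal M.
Implicit Types (a b c d h u v x y : R).

Definition loc_zero x := exists t, ~ M t /\ t * x = 0.
Definition loc_dvd d y := exists t c, ~ M t /\ t * y = c * d.

Lemma notin_maxM u v : ~ M u -> ~ M v -> ~ M (u * v).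
Proof. by case: (maximal_ideal_prime hM) => _ _ hP nu nv /hP[]. Qed.

Lemma notin_max1 : ~ M 1.
Proof. exact: maximal_ideal_neq1. Qed.

Lemma notin_max_prod (I : finType) (F : I -> R) :
  (forall i, ~ M (F i)) -> ~ M (\prod_i F i).
Proof.
move=> hF; apply: (big_ind (fun x => ~ M x)) => //; first exact: notin_max1.
exact: notin_maxM.
Qed.

Lemma loc_zero_ideal : is_ideal loc_zero.
Proof.
split.
- by exists 1; rewrite mulr0; split => //; exact: notin_max1.
- move=> x y [t [nt ht]] [t' [nt' ht']]; exists (t * t'); split; first exact: notin_maxM.
  have -> : t * t' * (x + y) = t' * (t * x) + t * (t' * y) by ring.
  by rewrite ht ht' !mulr0 addr0.
- by move=> a x [t [nt ht]]; exists t; split => //; rewrite mulrCA ht mulr0.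
Qed.

Lemma loc_zero_mx m n (X : 'M[R]_(m, n)) :
  mxin loc_zero X -> exists t, ~ M t /\ t *: X = 0.
Proof.
move=> hX.
have [f hf] := @boolp.choice _ _ (fun p t => ~ M t /\ t * X p.1 p.2 = 0)
  (fun p => hX p.1 p.2).
exists (\prod_p f p); split; first by apply: notin_max_prod => p; case: (hf p).
apply/matrixP => i j; rewrite !mxE (bigD1 (i, j)) //= mulrAC.
by case: (hf (i, j)) => _ /= ->; rewrite mul0r.
Qed.

Lemma loc_zero_mxcong m n (X Y : 'M[R]_(m, n)) :
  mxcong loc_zero X Y -> exists t, ~ M t /\ t *: X = t *: Y.
Proof.
move=> /loc_zero_mx[t [nt ht]]; exists t; split => //.
by apply/eqP; rewrite -subr_eq0 -scalerBr ht.
Qed.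

Definition loc_principal x (p : R * R) := ~ M p.2 /\ loc_dvd x p.1.

Lemma loc_principal_ideal x : loc_ideal M (loc_principal x).
Proof.
split.
- by move=> p [].
- move=> p q np nq [v [nv hv]] [_ [u [c [nu e]]]]; split => //.
  exists (v * u * p.2), (c * v * q.2); split; first by apply: notin_maxM => //; apply: notin_maxM.
  have hv' : v * (p.1 * q.2) = v * (q.1 * p.2).
    by apply/eqP; rewrite -subr_eq0 -mulrBr hv.
  transitivity (u * (v * (q.1 * p.2))); first by ring.
  by rewrite -hv'; transitivity ((u * p.1) * v * q.2); [ring | rewrite e; ring].
- split=> /=; first exact: notin_max1.
  by exists 1, 0; rewrite mulr0 mul0r; split => //; exact: notin_max1.
- move=> p q [np [u [c [nu e]]]] [nq [u' [c' [nu' e']]]].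
  split; first exact: notin_maxM.
  exists (u * u'), (c * u' * q.2 + c' * u * p.2); split; first exact: notin_maxM.
  transitivity ((u * p.1) * u' * q.2 + (u' * q.1) * u * p.2); first by rewrite /=; ring.
  by rewrite e e'; ring.
- move=> a p na [np [u [c [nu e]]]]; split; first exact: notin_maxM.
  exists u, (a.1 * c); split => //.
  transitivity (a.1 * (u * p.1)); first by rewrite /=; ring.
  by rewrite e; ring.
Qed.

Hypothesis har : arithmetic R.

Lemma loc_dvd_total a b : loc_dvd b a \/ loc_dvd a b.
Proof.
have self x : loc_principal x (x, 1).
  split; first exact: notin_max1.
  by exists 1, 1; rewrite !mul1r; split => //; exact: notin_max1.
case: (har hM (loc_principal_ideal a) (loc_principal_ideal b)) => sub.
  by left; case: (sub _ (self a)).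
by right; case: (sub _ (self b)).
Qed.

Hypothesis hk : krull_dim_eq R 0.

Lemma loc_nilpotent a : M a -> exists n, loc_zero (a ^+ n).
Proof.
move=> Ma; apply: NNPP => no0.
pose S x := exists t n, ~ M t /\ x = t * a ^+ n.
have hI0 : is_ideal (fun x : R => x = 0).
  by split=> [|x y -> ->|c x ->]; rewrite ?addr0 ?mulr0.
have S0 x : x = 0 -> ~ S x.
  by move=> -> [t [n [nt e]]]; apply: no0; exists n, t; split.
have [A [hA _ AS Amax]] := ideal_maximal_avoiding hI0 S0.
have S1 : S 1 by exists 1, 0%N; rewrite expr0 mulr1; split => //; exact: notin_max1.
have SM x y : S x -> S y -> S (x * y).
  move=> [t [n [nt ->]]] [t' [n' [nt' ->]]]; exists (t * t'), (n + n')%N.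
  by split; [exact: notin_maxM | rewrite exprD; ring].
have A_prime := maximal_avoiding_prime S1 SM hA AS Amax.
have AM x : A x -> M x.
  by move=> Ax; apply: NNPP => nMx; apply: (AS x Ax); exists x, 0%N; rewrite expr0 mulr1.
apply: (AS a (dim0_prime_maximal hk A_prime hM AM Ma)).
by exists 1, 1%N; rewrite expr1 mul1r; split => //; exact: notin_max1.
Qed.

Lemma loc_invertible u : ~ M u -> exists b, loc_zero (u * b - 1).
Proof.
move=> nu; have [m [b [Mm e]]] := maximal_ideal_inv hM nu.
have [n [t [nt htm]]] := loc_nilpotent Mm.
exists (b * \sum_(i < n) m ^+ i), t; split => //.
have -> : u * (b * \sum_(i < n) m ^+ i) - 1 = - m ^+ n.
  rewrite mulrA [u * b]mulrC (_ : b * u = 1 - m); last by rewrite e; ring.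
  have -> : (1 - m) * \sum_(i < n) m ^+ i = - ((m - 1) * \sum_(i < n) m ^+ i) by ring.
  by rewrite -subrX1; ring.
by rewrite mulrN htm oppr0.
Qed.

Lemma loc_dvd_quotient d y : loc_dvd d y -> exists c, loc_zero (y - c * d).
Proof.
move=> [t [c [nt e]]]; have [b [s [ns hs]]] := loc_invertible nt.
exists (b * c), s; split => //.
have -> : y - b * c * d = b * (t * y - c * d) - (t * b - 1) * y by ring.
by rewrite e subrr mulr0 add0r mulrN mulrA hs mul0r oppr0.
Qed.

Lemma loc_dvd_total_mod a b : exists c, loc_zero (a - c * b) \/ loc_zero (b - c * a).
Proof.
by case: (loc_dvd_total a b) => /loc_dvd_quotient[c hc]; exists c; [left|right].
Qed.

(* In R_M, Ann(d) <= (h) implies Ann(h) <= (d). The multipliers [rho] and [th]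
   are fixed so that the hypotheses hold at every maximal ideal avoiding them. *)
Lemma loc_dvd_of_ann_sub d h rho th y : ~ M rho -> ~ M th ->
  (forall z, z * d = 0 -> exists c, rho * z = c * h) ->
  th * (y * h) = 0 -> loc_dvd d y.
Proof.
move=> nrho nth annd hy.
have [//|[u [c [nu e]]]] := loc_dvd_total y d.
case: (classic (M c)) => [Mc|nc]; last first.
  have [b [s [ns hs]]] := loc_invertible nc.
  exists s, (s * b * u); split => //.
  have -> : s * y = s * b * (c * y) - s * (c * b - 1) * y by ring.
  by rewrite hs mul0r subr0 -e mulrA.
suff [t [nt ht]] : loc_zero y by exists t, 0; rewrite ht mul0r.
have descend k : loc_zero (y * c ^+ k.+1) -> loc_zero (y * c ^+ k).
  move=> [t [nt ht]].
  have [e' he'] : exists e', rho * (t * u * c ^+ k) = e' * h.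
    apply: annd; have -> : t * u * c ^+ k * d = t * c ^+ k * (u * d) by ring.
    by rewrite e -ht exprS; ring.
  exists (th * rho * t * u); split; first by do 3 (apply: notin_maxM => //).
  have -> : th * rho * t * u * (y * c ^+ k) = th * y * (rho * (t * u * c ^+ k)) by ring.
  rewrite he'; have -> : th * y * (e' * h) = e' * (th * (y * h)) by ring.
  by rewrite hy mulr0.
have [n /(is_idealMl y loc_zero_ideal)] := loc_nilpotent Mc.
by elim: n => [|n IHn]; rewrite ?expr0 ?mulr1 // => /descend.
Qed.

End Localization.

Lemma scale_eq_mull (R : comNzRingType) (V : lmodType R) (t t' : R) (x y : V) :
  t *: x = t *: y -> (t' * t) *: x = (t' * t) *: y.
Proof. by move=> e; rewrite -!scalerA e. Qed.

Section LocalMatrices.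
Variable R : comNzRingType.
Variable M : R -> Prop.
Hypotheses (hM : maximal_ideal M) (har : arithmetic R) (hk : krull_dim_eq R 0).

Lemma local_smith m n (A : 'M[R]_(m, n)) :
  exists (P P' : 'M_m) (Q Q' : 'M_n) (d : nat -> R) (s : R), ~ M s /\
  [/\ s *: (P *m P') = s *: 1%:M, s *: (P' *m P) = s *: 1%:M,
      s *: (Q *m Q') = s *: 1%:M & s *: (P *m A *m Q) = s *: diag_rect d m n].
Proof.
have [P [P' [Q [Q' [d [[c1 c2] [c3 _] c5]]]]]] :=
  mx_diagonalizable_modP (loc_zero_ideal hM) (loc_dvd_total_mod hM har hk) A.
have [t1 [n1 e1]] := loc_zero_mxcong hM c1.
have [t2 [n2 e2]] := loc_zero_mxcong hM c2.
have [t3 [n3 e3]] := loc_zero_mxcong hM c3.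
have [t5 [n5 e5]] := loc_zero_mxcong hM c5.
exists P, P', Q, Q', d, (t1 * t2 * t3 * t5).
split; first by do 3 (apply: notin_maxM => //).
split.
- by rewrite (_ : t1 * t2 * t3 * t5 = (t2 * t3 * t5) * t1); [exact: scale_eq_mull | ring].
- by rewrite (_ : t1 * t2 * t3 * t5 = (t1 * t3 * t5) * t2); [exact: scale_eq_mull | ring].
- by rewrite (_ : t1 * t2 * t3 * t5 = (t1 * t2 * t5) * t3); [exact: scale_eq_mull | ring].
- exact: scale_eq_mull.
Qed.

Lemma local_column_generators m n (G : 'M[R]_(m, n)) :
  exists (h : 'I_n -> R) (cf : 'I_m -> 'I_n -> R) (tau : R), ~ M tau /\
  (forall i, h i = 0 \/ exists j, h i = G j i) /\
  (forall j i, tau * G j i = tau * cf j i * h i).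
Proof.
have [h hh] : {h : 'I_n -> R & forall i, (h i = 0 \/ exists j, h i = G j i) /\
    forall j, exists c, loc_zero M (G j i - c * h i)}.
  apply: (@boolp.choice _ _ (fun i hi => (hi = 0 \/ exists j, hi = G j i) /\
    forall j, exists c, loc_zero M (G j i - c * hi))) => i.
  have [hi hs hdiv] := seq_divisor_mod (loc_zero_ideal hM)
    (loc_dvd_total_mod hM har hk) [seq G j i | j <- enum 'I_m].
  exists hi; split; first by case: hs => [->|/mapP[j _ ->]]; [left | right; exists j].
  by move=> j; apply: hdiv; apply/mapP; exists j; rewrite ?mem_enum.
have [cf hcf] := @boolp.choice _ _ (fun p c => loc_zero M (G p.1 p.2 - c * h p.2))
  (fun p => (hh p.2).2 p.1).
have [tau [ntau htau]] := @loc_zero_mx _ _ hM _ _ (\matrix_(j, i) (G j i - cf (j, i) * h i))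
  (fun j i => ltac:(rewrite mxE; exact: hcf (j, i))).
exists h, (fun j i => cf (j, i)), tau; split => //; split => [i|j i]; first exact: (hh i).1.
have := congr1 (fun X : 'M_(m, n) => X j i) htau; rewrite /= !mxE => e.
by apply/eqP; rewrite -subr_eq0 -mulrA -mulrBr e.
Qed.

End LocalMatrices.

Section DiagRect.
Variable R : comNzRingType.

Definition diag_entry k (d : nat -> R) {n} (i : 'I_n) : R := if (i < k)%N then d i else 0.

Lemma mul_diag_rect_eq0 p k1 k0 (d : nat -> R) (Z : 'M[R]_(p, k1)) :
  Z *m diag_rect d k1 k0 = 0 <-> forall a i, Z a i * diag_entry k0 d i = 0.
Proof.
have entry a (j : 'I_k0) :
    (Z *m diag_rect d k1 k0) a j = \sum_(i : 'I_k1 | (i : nat) == j) Z a i * d i.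
  rewrite mxE [RHS]big_mkcond; apply: eq_bigr => i _; rewrite mxE.
  by case: ifP; rewrite ?mulr0.
split=> [hZ a i|hZ].
  rewrite /diag_entry; case: ifP => hi; last by rewrite mulr0.
  have := congr1 (fun X : 'M_(p, k0) => X a (Ordinal hi)) hZ.
  by rewrite /= entry mxE (big_pred1 i).
apply/matrixP => a j; rewrite entry mxE big1 // => i /eqP eij.
by have := hZ a i; rewrite /diag_entry eij ltn_ord.
Qed.

End DiagRect.

Section RowSpan.
Variable R : comNzRingType.

Definition in_rowspan m n (G : 'M[R]_(m, n)) (y : 'rV[R]_n) := exists v, y = v *m G.

Lemma in_rowspan_col_mx_exprD m m' n (G : 'M[R]_(m, n)) (G' : 'M[R]_(m', n))
    (r r' : R) k k' (x : 'rV[R]_n) :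
  in_rowspan G (r ^+ k *: x) -> in_rowspan G' (r' ^+ k' *: x) ->
  in_rowspan (col_mx G G') ((r + r') ^+ (k + k') *: x).
Proof.
move=> [v hv] [v' hv'].
have spanD y z : in_rowspan (col_mx G G') y -> in_rowspan (col_mx G G') z ->
    in_rowspan (col_mx G G') (y + z).
  by move=> [a ->] [b ->]; exists (a + b); rewrite mulmxDl.
have spanZ c y : in_rowspan (col_mx G G') y -> in_rowspan (col_mx G G') (c *: y).
  by move=> [a ->]; exists (c *: a); rewrite scalemxAl.
(* each binomial term carries r ^+ k or r' ^+ k' *)
rewrite exprDn scaler_suml; apply: (big_ind (in_rowspan (col_mx G G'))) => //.
  by exists 0; rewrite mul0mx.
move=> i _; rewrite -mulr_natl -scalerA; apply: (spanZ).
have [le_k'i|lt_ik'] := leqP k' i.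
  rewrite -(subnK le_k'i) exprD mulrA -scalerA hv'; apply: (spanZ).
  by exists (row_mx 0 v'); rewrite mul_row_col mul0mx add0r.
have le_k : (k <= k + k' - i)%N by rewrite -addnBA ?leq_addr // ltnW.
rewrite -(subnK le_k) exprD mulrAC -scalerA hv; apply: (spanZ).
by exists (row_mx v 0); rewrite mul_row_col mul0mx addr0.
Qed.

Lemma in_rowspan_saturation_ideal m n (G : 'M[R]_(m, n)) (r : R) (x : 'rV[R]_n) :
  is_ideal (fun t => exists k, in_rowspan G ((t * r ^+ k) *: x)).
Proof.
split.
- by exists 0%N, 0; rewrite mul0r scale0r mul0mx.
- move=> t t' [k [v hv]] [k' [v' hv']]; exists (k + k')%N.
  exists (r ^+ k' *: v + r ^+ k *: v').
  rewrite mulmxDl -!scalemxAl -hv -hv' !scalerA -scalerDl; congr (_ *: _).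
  by rewrite exprD; ring.
- move=> c t [k [v hv]]; exists k, (c *: v).
  by rewrite -scalemxAl -hv scalerA mulrA.
Qed.

End RowSpan.

Section Kernel.
Variable R : comNzRingType.
Variables k0 k1 k2 : nat.
Variables (A0 : 'M[R]_(k1, k0)) (A1 : 'M[R]_(k2, k1)).
Hypothesis A1_ker : forall u : 'rV[R]_k1, u *m A0 = 0 <-> exists v, u = v *m A1.
Hypotheses (har : arithmetic R) (hk : krull_dim_eq R 0).

Lemma mulmx_A1A0 : A1 *m A0 = 0.
Proof.
apply/row_matrixP => j; rewrite row_mul row0; apply/A1_ker.
by exists (delta_mx 0 j); rewrite -rowE.
Qed.

(* Read in R_w: P is invertible, (h i) is the annihilator of (dd i), and the
   rows of diag(h) P span the image of A1. *)
Definition kernel_certificate (w : R) (P P' : 'M[R]_k1) (h dd : 'I_k1 -> R)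
    (X : 'M[R]_(k2, k1)) (Y : 'M[R]_(k1, k2)) :=
  [/\ w *: (P *m P') = w *: 1%:M,
      forall i y, y * dd i = 0 -> exists c, w * y = c * h i,
      forall i, w * (h i * dd i) = 0,
      w *: A1 = X *m (diag_mx (\row_i h i) *m P) &
      w *: (diag_mx (\row_i h i) *m P) = Y *m A1].

Section SmithData.
Variables (P P' : 'M[R]_k1) (Q Q' : 'M[R]_k0) (d : nat -> R) (s : R).
Hypotheses (sPP' : s *: (P *m P') = s *: 1%:M) (sP'P : s *: (P' *m P) = s *: 1%:M)
  (sQQ' : s *: (Q *m Q') = s *: 1%:M)
  (sPAQ : s *: (P *m A0 *m Q) = s *: diag_rect d k1 k0).
Local Notation D := (diag_rect d k1 k0).
Local Notation dd := (diag_entry k0 d).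

Lemma smith_PA0 : (s * s) *: (P *m A0) = (s * s) *: (D *m Q').
Proof.
transitivity (s *: (P *m A0 *m (s *: (Q *m Q')))).
  by rewrite sQQ' -scalemxAr mulmx1 scalerA.
by rewrite -scalemxAr mulmxA scalemxAl sPAQ -scalemxAl !scalerA.
Qed.

Lemma smith_image_ann j i : (s * s) * ((A1 *m P') j i * dd i) = 0.
Proof.
have GD : ((s * s) *: (A1 *m P')) *m D = 0.
  transitivity (s *: (A1 *m P' *m (s *: D))).
    by rewrite -scalemxAr scalerA -scalemxAl.
  rewrite -sPAQ.
  have -> : A1 *m P' *m (s *: (P *m A0 *m Q)) = A1 *m (s *: (P' *m P)) *m A0 *m Q.
    by rewrite -!scalemxAr -!scalemxAl !mulmxA.
  by rewrite sP'P -scalemxAr mulmx1 -!scalemxAl mulmx_A1A0 mul0mx !scaler0.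
by have := (mul_diag_rect_eq0 _ _ _).1 GD j i; rewrite [in X in X -> _]mxE -mulrA.
Qed.

Variables (h : 'I_k1 -> R) (cf : 'I_k2 -> 'I_k1 -> R) (tau : R).
Hypotheses (h_col : forall i, h i = 0 \/ exists j, h i = (A1 *m P') j i)
  (h_gen : forall j i, tau * (A1 *m P') j i = tau * cf j i * h i).
Local Notation B := (diag_mx (\row_i h i) *m P).

Lemma gen_ann i : (s * s) * (h i * dd i) = 0.
Proof. by case: (h_col i) => [->|[j ->]]; [rewrite mul0r mulr0 | exact: smith_image_ann]. Qed.

Lemma ann_sub_gen i y : y * dd i = 0 -> exists c, (tau * (s * s * s)) * y = c * h i.
Proof.
move=> hy; pose z : 'rV_k1 := \row_k (if k == i then y else 0).
have zD : z *m D = 0.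
  apply/mul_diag_rect_eq0 => a k; rewrite mxE.
  by case: eqP => [->|_]; [exact: hy | rewrite mul0r].
have [v hv] : exists v, (s * s) *: (z *m P) = v *m A1.
  apply/A1_ker.
  by rewrite -scalemxAl -mulmxA scalemxAr smith_PA0 -scalemxAr mulmxA zD mul0mx scaler0.
have ez : (s * s * s) *: z = s *: (v *m (A1 *m P')).
  rewrite mulmxA -hv.
  transitivity ((s * s) *: (z *m (s *: (P *m P')))).
    by rewrite sPP' -scalemxAr mulmx1 scalerA.
  by rewrite -scalemxAr -scalemxAl !scalerA mulmxA mulrC.
have := congr1 (fun X : 'rV_k1 => X 0 i) ez.
rewrite /= [LHS]mxE [in LHS]mxE eqxx [RHS]mxE [in RHS]mxE => e.
exists (s * \sum_j v 0 j * (tau * cf j i)).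
transitivity (s * (tau * \sum_j v 0 j * (A1 *m P') j i)); first by rewrite -mulrA e; ring.
rewrite mulr_sumr -mulrA mulr_suml; congr (_ * _); apply: eq_bigr => j _.
by rewrite mulrCA h_gen; ring.
Qed.

Lemma gen_rows_in_image : exists Y, (s * s * s) *: B = Y *m A1.
Proof.
have hD : ((s * s) *: diag_mx (\row_i h i)) *m D = 0.
  apply/mul_diag_rect_eq0 => a i; rewrite !mxE.
  case: eqP => [->|_]; last by rewrite mulr0n mulr0 mul0r.
  by rewrite mulr1n -mulrA gen_ann.
have BA0 : ((s * s * s) *: B) *m A0 = 0.
  rewrite -scalemxAl -mulmxA -mulrA -scalerA scalemxAr smith_PA0 -scalemxAr mulmxA.
  by rewrite [(s * s) *: _]scalemxAl [(s * s) *: _]scalemxAl hD mul0mx scaler0.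
have [fy hfy] : {fy : 'I_k1 -> 'rV_k2 & forall i, row i ((s * s * s) *: B) = fy i *m A1}.
  apply: (@boolp.choice _ _ (fun i v => row i ((s * s * s) *: B) = v *m A1)) => i.
  by apply/A1_ker; rewrite -row_mul BA0 row0.
exists (\matrix_(i, j) fy i 0 j).
apply/row_matrixP => i; rewrite row_mul hfy; congr (_ *m _).
by apply/rowP => j; rewrite !mxE.
Qed.

Lemma image_in_gen_rows : exists X, (tau * (s * s * s) * (s * s) * s) *: A1 = X *m B.
Proof.
have [fc hfc] : {fc : 'I_k2 * 'I_k1 -> R & forall p,
    (tau * (s * s * s)) * ((s * s) * (A1 *m P') p.1 p.2) = fc p * h p.2}.
  apply: (@boolp.choice _ _ (fun p c =>
    (tau * (s * s * s)) * ((s * s) * (A1 *m P') p.1 p.2) = c * h p.2)) => p.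
  by apply: ann_sub_gen; rewrite -mulrA; exact: smith_image_ann.
pose C := \matrix_(j, i) fc (j, i).
have eC : ((tau * (s * s * s)) * (s * s)) *: (A1 *m P') = C *m diag_mx (\row_i h i).
  apply/matrixP => j i; rewrite mul_mx_diag [in RHS]mxE [C _ _]mxE.
  by rewrite [in RHS]mxE -(hfc (j, i)) [in LHS]mxE /=; ring.
exists (s *: C).
transitivity (((tau * (s * s * s)) * (s * s)) *: (A1 *m (s *: (P' *m P)))).
  by rewrite sP'P -scalemxAr mulmx1 scalerA.
rewrite -scalemxAr mulmxA scalerA mulrC -scalerA scalemxAl mulmxA -scalemxAl eC.
by rewrite !scalemxAl.
Qed.

End SmithData.

Lemma local_kernel_certificate M : maximal_ideal M ->
  exists w P P' h dd X Y, ~ M w /\ kernel_certificate w P P' h dd X Y.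
Proof.
move=> hM.
have [P [P' [Q [Q' [d [s [ns [sPP' sP'P sQQ' sPAQ]]]]]]]] := local_smith hM har hk A0.
have [h [cf [tau [ntau [h_col h_gen]]]]] := local_column_generators hM har hk (A1 *m P').
have [Y eY] := gen_rows_in_image sP'P sQQ' sPAQ h_col.
have [X eX] := image_in_gen_rows sPP' sP'P sQQ' sPAQ h_gen.
pose w := tau * (s * s * s) * (s * s) * s.
exists w, P, P', h, (diag_entry k0 d), X, ((tau * (s * s) * s) *: Y).
split; first by rewrite /w; do 5 (apply: notin_maxM => //).
split => //.
- exact: scale_eq_mull.
- move=> i y /(ann_sub_gen sPP' sQQ' sPAQ h_gen)[c hc]; exists (s * s * s * c).
  transitivity ((s * s * s) * (tau * (s * s * s) * y)); first by rewrite /w; ring.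
  by rewrite hc; ring.
- move=> i; transitivity (tau * (s * s * s * s) * (s * s * (h i * diag_entry k0 d i))).
    by rewrite /w; ring.
  by rewrite (gen_ann sP'P sPAQ h_col) mulr0.
- by rewrite -scalemxAl -eY scalerA; congr (_ *: _); rewrite /w; ring.
Qed.


Section Syzygy.
Variables (w : R) (P P' : 'M[R]_k1) (h dd : 'I_k1 -> R).
Variables (X : 'M[R]_(k2, k1)) (Y : 'M[R]_(k1, k2)).
Hypothesis cert : kernel_certificate w P P' h dd X Y.
Local Notation B := (diag_mx (\row_i h i) *m P).

Definition syzygy_mx : 'M[R]_(k2 + k1, k2) :=
  col_mx ((w * w)%:M - X *m Y) (diag_mx (\row_i dd i) *m Y).

Lemma syzygy_mxA1 : syzygy_mx *m A1 = 0.
Proof.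
case: cert => _ _ hd eX eY.
rewrite /syzygy_mx mul_col_mx -[0]col_mx0; congr col_mx.
  rewrite mulmxBl -mulmxA -eY mul_scalar_mx -scalerA eX -scalemxAr.
  by rewrite subrr.
rewrite -mulmxA -eY -scalemxAr mulmxA mulmx_diag mul_diag_mx.
apply/matrixP => i j; rewrite !mxE.
have -> : w * (dd i * h i * P i j) = (w * (h i * dd i)) * P i j by ring.
by rewrite hd mul0r.
Qed.

(* With y := x X, the certificate gives w y_i h_i = 0, so near M each y_i is a
   multiple of dd i (loc_dvd_of_ann_sub); writing y = c diag(dd) up to a unit,
   [row_mx x c *m syzygy_mx] is a unit multiple of x. *)
Lemma syzygy_mx_local_span M : maximal_ideal M -> ~ M w ->
  forall x : 'rV_k2, x *m A1 = 0 ->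
  exists t (v : 'rV_(k2 + k1)), ~ M t /\ t *: x = v *m syzygy_mx.
Proof.
case: cert => wPP' ann hd eX _ hM nw x hx.
pose y := x *m X.
have yB : y *m B = 0 by rewrite /y -mulmxA -eX -scalemxAr hx scaler0.
have yh i : w * (y 0 i * h i) = 0.
  have e : w *: (y *m diag_mx (\row_i h i)) = 0.
    transitivity ((y *m diag_mx (\row_i h i)) *m (w *: (P *m P'))).
      by rewrite wPP' -scalemxAr mulmx1.
    by rewrite -scalemxAr !mulmxA -(mulmxA y) yB mul0mx scaler0.
  by have := congr1 (fun Z : 'rV_k1 => Z 0 i) e; rewrite /= mxE mul_mx_diag !mxE.
have [f hf] : {f : 'I_k1 -> R * R &
    forall i, ~ M (f i).1 /\ (f i).1 * y 0 i = (f i).2 * dd i}.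
  apply: (@boolp.choice _ _ (fun i p => ~ M p.1 /\ p.1 * y 0 i = p.2 * dd i)) => i.
  have [t [c [nt ht]]] := loc_dvd_of_ann_sub hM har hk nw nw (@ann i) (yh i).
  by exists (t, c).
pose T := \prod_i (f i).1.
pose c : 'rV_k1 := \row_i ((\prod_(j | j != i) (f j).1) * (f i).2).
have nT : ~ M T by apply: notin_max_prod => // i; case: (hf i).
exists (T * w * w), (row_mx (T *: x) c); split; first by do 2 (apply: notin_maxM => //).
have ecd : c *m diag_mx (\row_i dd i) = T *: y.
  apply/matrixP => a i; rewrite (ord1 a).
  transitivity ((\prod_(j | j != i) (f j).1) * ((f i).2 * dd i)).
    by rewrite mul_mx_diag !mxE mulrA.
  case: (hf i) => _ <-.
  by rewrite [(T *: y) _ _]mxE /T [in RHS](bigD1 i) //=; ring.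
rewrite /syzygy_mx mul_row_col mulmxBr mul_mx_scalar mulmxA ecd -!scalemxAl -/y.
by rewrite mulmxA -/y subrK scalerA; congr (_ *: _); ring.
Qed.

End Syzygy.

Definition ker_gen_upto (r : R) := exists k3 (G : 'M[R]_(k3, k2)),
  G *m A1 = 0 /\ forall x, x *m A1 = 0 -> exists n, in_rowspan G (r ^+ n *: x).

Lemma ker_gen_upto_ideal : is_ideal ker_gen_upto.
Proof.
split.
- exists 0%N, 0; split; first by rewrite mul0mx.
  by move=> x _; exists 1%N, 0; rewrite expr1 scale0r mul0mx.
- move=> r r' [k [G [GA1 hG]]] [k' [G' [G'A1 hG']]].
  exists (k + k')%N, (col_mx G G'); split; first by rewrite mul_col_mx GA1 G'A1 col_mx0.
  move=> x hx; have [n hn] := hG x hx; have [n' hn'] := hG' x hx.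
  by exists (n + n')%N; apply: in_rowspan_col_mx_exprD.
- move=> a r [k [G [GA1 hG]]]; exists k, G; split => // x hx.
  have [n [v hv]] := hG x hx.
  by exists n, (a ^+ n *: v); rewrite exprMn -scalerA hv scalemxAl.
Qed.

Lemma ker_gen_upto_local M : maximal_ideal M -> exists r, ker_gen_upto r /\ ~ M r.
Proof.
move=> hM; have [w [P [P' [h [dd [X [Y [nw cert]]]]]]]] := local_kernel_certificate hM.
exists w; split => //; exists (k2 + k1)%N, (syzygy_mx w dd X Y).
split=> [|x hx]; first exact: syzygy_mxA1 cert.
have [n hn] : exists n, in_rowspan (syzygy_mx w dd X Y) ((1 * w ^+ n) *: x).
  apply: local_global_ideal1 (in_rowspan_saturation_ideal _ _ _) _ => M' hM'.
  case: (classic (M' w)) => [Mw|nw'].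
    have [n [t [nt ht]]] := loc_nilpotent hM' hk Mw.
    exists t; split => //; exists n, 0.
    by rewrite ht scale0r mul0mx.
  have [t [v [nt ht]]] := syzygy_mx_local_span cert hM' nw' hx.
  by exists t; split => //; exists 0%N, v; rewrite expr0 mulr1.
by exists n; rewrite -[w ^+ n]mul1r.
Qed.

Theorem ker_finitely_generated :
  exists k3 (A2 : 'M[R]_(k3, k2)), forall u : 'rV_k2, u *m A1 = 0 <-> exists v, u = v *m A2.
Proof.
have [k3 [G [GA1 hG]]] := local_global_ideal1 ker_gen_upto_ideal ker_gen_upto_local.
exists k3, G => u; split; first by move=> /hG[n]; rewrite expr1n scale1r.
by move=> [v ->]; rewrite -mulmxA GA1 mulmx0.
Qed.

End Kernel.

Section Resolution.
Variable R : comNzRingType.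
Hypotheses (har : arithmetic R) (hk : krull_dim_eq R 0).

Record exact_pair := ExactPair {
  rk0 : nat; rk1 : nat; rk2 : nat;
  map0 : 'M[R]_(rk1, rk0); map1 : 'M[R]_(rk2, rk1);
  exact_map : forall u : 'rV[R]_rk1, u *m map0 = 0 <-> exists v, u = v *m map1 }.

(* Only the last rank and map depend on the choice; [map0 (exact_shift e)]
   reduces to [map1 e]. *)
Definition exact_shift (e : exact_pair) : exact_pair :=
  let H := ker_finitely_generated (@exact_map e) har hk in
  ExactPair (proj2_sig (boolp.cid (proj2_sig (boolp.cid H)))).

Lemma lambda_ge2_infinite (E : lmodType R) : lambda_ge E 2 -> lambda_infinite E.
Proof.
move=> [k [A [f [f_onto A0_ker A1_ker]]]] n.
pose e i := iter i exact_shift (ExactPair (A1_ker 0%N isT)).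
exists (fun i => rk0 (e i)), (fun i => map0 (e i)), f; split => // [_|i _].
  exact: A0_ker.
exact: @exact_map (e i).
Qed.

End Resolution.

Theorem corollary2p7 (R : comNzRingType) :
  arithmetic R -> krull_dim_eq R 0 -> lambda_dim_le R 2.
Proof. by move=> har hk; exists 2%N; split => // E; apply: lambda_ge2_infinite. Qed.
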